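(* Let $G$ be a group with identity $e$, $A$ a set with at least two elements, and $\tau: A^G\to A^G$ a lazy cellular automaton with unique active transition $p \in A^S$. For any $n \in \mathbb{N}$, $\tau^{n} \neq \tau^{n+1}$ if and only if there exists $x \in A^G$ such that $p$ appears in $\tau^{n}(x)$.
   Context: $A^G$ is the set of maps $G \to A$ with shift action $(g\cdot x)(h) := x(hg)$. A cellular automaton is a map $\tau : A^G \to A^G$ with a finite $S \subseteq G$ and $\mu : A^S \to A$ such that $\tau(x)(g) = \mu((g\cdot x)|_S)$. $\tau$ is lazy with unique active transition $p \in A^S$ if there is such a local defining map $\mu : A^S \to A$ with $e \in S$ such that for all $z \in A^S$: $\mu(z) = z(e)$ iff $z \neq p$. A pattern $p \in A^S$ appears in $x \in A^G$ if there is $g \in G$ with $(g\cdot x)|_S = p$. $\tau^n$ is the $n$-fold composition of $\tau$, with $\tau^0$ the identity, and $\mathbb{N} = \{0,1,2,\dots\}$. *)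

From mathcomp Require Import all_boot monoid finmap.
Unset Printing Implicit Defensive.
Local Open Scope fset_scope.

Section CA.
Variables (G : groupType) (A : Type).

Definition shift (g : G) (x : G -> A) : G -> A := fun h => x (h * g)%g.

Definition restr (S : {fset G}) (x : G -> A) : {ffun S -> A} :=
  [ffun s : S => x (val s)].

Definition local_rule (tau : (G -> A) -> (G -> A)) (S : {fset G})
  (mu : {ffun S -> A} -> A) : Prop :=
  forall (x : G -> A) (g : G), tau x g = mu (restr S (shift g x)).

Definition cellular_automaton (tau : (G -> A) -> (G -> A)) : Prop :=
  exists (S : {fset G}) (mu : {ffun S -> A} -> A), local_rule tau S mu.

Definition lazy_unique_active (tau : (G -> A) -> (G -> A)) (S : {fset G})
  (p : {ffun S -> A}) : Prop :=
  exists (He : (1%g : G) \in S) (mu : {ffun S -> A} -> A),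
    local_rule tau S mu /\
    forall z : {ffun S -> A}, mu z = z [` He] <-> z <> p.

Definition appears (S : {fset G}) (p : {ffun S -> A}) (y : G -> A) : Prop :=
  exists g : G, restr S (shift g y) = p.

End CA.

Arguments shift {G A} g x _.
Arguments restr {G A} S x.
Arguments local_rule {G A} tau S mu.
Arguments cellular_automaton {G A} tau.
Arguments lazy_unique_active {G A} tau S p.
Arguments appears {G A} S p y.

From mathcomp Require Import all_boot monoid finmap.
From Stdlib Require Import Classical FunctionalExtensionality.

(* A lazy automaton with unique active transition p rewrites the cell g of y
   exactly when p appears in y at g.  Hence tau^(n+1) differs from tau^n iff
   tau moves some cell of some tau^n(x), i.e. iff p appears in some tau^n(x). *)

Lemma iter_neq_iterS (T U : Type) (f : (T -> U) -> T -> U) (n : nat) :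
  iter n f <> iter n.+1 f <->
  exists (x : T -> U) (t : T), f (iter n f x) t <> iter n f x t.
Proof.
split=> [neq_f | [x [t neq_xt]] eq_f].
- apply: NNPP => no_move; apply: neq_f.
  apply: functional_extensionality => x; apply: functional_extensionality => t.
  rewrite iterS; apply: NNPP => neq_xt; apply: no_move.
  by exists x, t => /esym.
- by apply: neq_xt; rewrite -iterS -eq_f.
Qed.

Lemma restr_shift_one {G : groupType} {A : Type} {S : {fset G}}
    (He : (1%g : G) \in S) (y : G -> A) (g : G) :
  restr S (shift g y) [` He]%fset = y g.
Proof. by rewrite ffunE /shift /= mul1g. Qed.

Lemma lazy_moves_iff {G : groupType} {A : Type}
    {tau : (G -> A) -> (G -> A)} {S : {fset G}} {p : {ffun S -> A}} :
  lazy_unique_active tau S p ->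
  forall (y : G -> A) (g : G), tau y g <> y g <-> restr S (shift g y) = p.
Proof.
move=> [He [mu [tau_mu mu_lazy]]] y g.
rewrite tau_mu -(restr_shift_one He y g) mu_lazy.
by split=> [/NNPP | -> ].
Qed.

Theorem corollary1 (G : groupType) (A : Type)
  (HA : exists a b : A, a <> b)
  (tau : (G -> A) -> (G -> A)) (S : {fset G}) (p : {ffun S -> A})
  (Hlazy : lazy_unique_active tau S p) (n : nat) :
  iter n tau <> iter n.+1 tau <-> exists x : G -> A, appears S p (iter n tau x).
Proof.
rewrite iter_neq_iterS.
by split=> -[x [g /(lazy_moves_iff Hlazy) at_g]]; exists x, g.
Qed.
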